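(* Let $q_1,q_2$ be coprime positive integers, $Q=q_1q_2$, let $V:\mathbb{Z}^2\to\mathbb{R}$ be $(q_1,q_2)$-periodic, and let $\lambda_*\in\mathbb{C}$. Then the Newton polytope of the Laurent polynomial $z\mapsto\mathcal{P}(z,\lambda_* )$ is the quadrilateral in $\mathbb{R}^2$ with vertices $(q_2,0)$, $(0,q_1)$, $(-q_2,0)$, $(0,-q_1)$ (coordinates being the exponents of $z_1$ and $z_2$ respectively).
   Context: $V$ is $(q_1,q_2)$-periodic if $V(n_1,n_2)=V(n_1+q_1,n_2)=V(n_1,n_2+q_2)$ for all $(n_1,n_2)\in\mathbb{Z}^2$. The operator $\Delta+V$ acts on $u:\mathbb{Z}^2\to\mathbb{C}$ by $((\Delta+V)u)(n)=u(n_1+1,n_2)+u(n_1-1,n_2)+u(n_1,n_2+1)+u(n_1,n_2-1)+V(n)u(n)$. For $z=(z_1,z_2)\in(\mathbb{C}\setminus\{0\})^2$, $\mathcal{D}_V(z)$ is the $Q\times Q$ matrix of $\Delta+V$ acting on the space of functions $u$ with $u(n_1+q_1,n_2)=z_1u(n)$ and $u(n_1,n_2+q_2)=z_2u(n)$ for all $n$, in the coordinates $\{u(n_1,n_2):1\le n_1\le q_1,1\le n_2\le q_2\}$, and $\mathcal{P}(z,\lambda)=\det(\mathcal{D}_V(z)-\lambda I)$, a Laurent polynomial in $z$. For a Laurent polynomial $f(z)=\sum_i c_iz^{e_i}$ with $c_i\neq0$, its support is $\{e_i\}\subset\mathbb{Z}^2$ and its Newton polytope is the convex hull of its support. *)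

From HB Require Import structures.
From mathcomp Require Import all_boot all_order all_algebra.
From mathcomp Require Import reals.
From mathcomp.real_closed Require Import complex.
Set Implicit Arguments. Unset Strict Implicit. Unset Printing Implicit Defensive.
Import Order.TTheory GRing.Theory Num.Theory.
Local Open Scope ring_scope.

(* The fundamental cell
   {(n1,n2) : 1 <= n1 <= q1, 1 <= n2 <= q2} is encoded by the finite type
   cell q1 q2 := 'I_q1 * 'I_q2, the pair (a1, a2) standing for
   (n1, n2) = (a1 + 1, a2 + 1). *)

Definition cell (q1 q2 : nat) := ('I_q1 * 'I_q2)%type.

Definition periodic (R : Type) (q1 q2 : nat) (V : int * int -> R) : Prop :=
  forall n1 n2 : int,
    V (n1, n2) = V (n1 + q1%:Z, n2) /\ V (n1, n2) = V (n1, n2 + q2%:Z).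

Definition dirs : seq (int * int) := [:: (1, 0); (-1, 0); (0, 1); (0, -1)].

(* The matrix D_V(z) of Delta + V on the (z1,z2)-quasi-periodic functions
   (u(n1+q1,n2) = z1 u(n), u(n1,n2+q2) = z2 u(n)), in the coordinates
   u(a), a in the fundamental cell (ordered by enum of cell q1 q2).
   A neighbour a + d (0-based) is reduced as  a + d = k q + r  with
   0 <= r < q  (Euclidean division, componentwise), so that
   u(a + d) = z1^k1 z2^k2 u(r). *)
Definition Dmx (R : realType) (q1 q2 : nat) (V : int * int -> R) (z1 z2 : R[i])
  : 'M[R[i]]_#|{: cell q1 q2}| :=
  \matrix_(i < #|{: cell q1 q2}|, j < #|{: cell q1 q2}|)
    let a : cell q1 q2 := enum_val i in let b : cell q1 q2 := enum_val j in
    (if a == b then Complex (V ((a.1 : int) + 1, (a.2 : int) + 1)) 0 else 0)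
    + \sum_(d <- dirs)
        let m1 := (a.1 : int) + d.1 in let m2 := (a.2 : int) + d.2 in
        if ((b.1 : int) == (m1 %% q1%:Z)%Z) && ((b.2 : int) == (m2 %% q2%:Z)%Z)
        then z1 ^ (m1 %/ q1%:Z)%Z * z2 ^ (m2 %/ q2%:Z)%Z
        else 0.

Definition Pdet (R : realType) (q1 q2 : nat) (V : int * int -> R) (lam : R[i])
  (z1 z2 : R[i]) : R[i] :=
  \det (Dmx q1 q2 V z1 z2 - lam%:M).

Definition laurent_rep (R : realType) (f : R[i] -> R[i] -> R[i])
  (c : int * int -> R[i]) : Prop :=
  exists s : seq (int * int),
    [/\ uniq s, (forall e, c e != 0 -> e \in s) &
        forall z1 z2 : R[i], z1 != 0 -> z2 != 0 ->
          f z1 z2 = \sum_(e <- s) c e * z1 ^ e.1 * z2 ^ e.2].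

Definition ptR (R : realType) (e : int * int) : R * R := ((e.1)%:~R, (e.2)%:~R).

Definition conv_hull (R : realType) (A : int * int -> Prop) (p : R * R) : Prop :=
  exists (s : seq (int * int)) (w : int * int -> R),
    [/\ forall e, e \in s -> A e,
        forall e, e \in s -> 0 <= w e,
        \sum_(e <- s) w e = 1,
        p.1 = \sum_(e <- s) w e * (ptR R e).1 &
        p.2 = \sum_(e <- s) w e * (ptR R e).2].

Definition support (R : realType) (c : int * int -> R[i]) (e : int * int) : Prop :=
  c e != 0.

Definition newton_polytope (R : realType) (c : int * int -> R[i]) : R * R -> Prop :=
  conv_hull (R:=R) (support c).

(* Expanding det (D_V(z) - lambda) by Leibniz, every term chooses for each cell
   of the fundamental domain a move (stay, or go to one of the four neighbours)
   and a permutation sending each cell to its target; its monomial z1^d1 z2^d2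
   records how often the moves wrap around the torus.  Since the permutation
   returns every cell, q1 d1 and q2 d2 are the total horizontal and vertical
   displacements, so q1 |d1| + q2 |d2| <= Q: the support lies in the diamond.
   The exponent (q2, 0) is reached only when every cell moves right and the
   permutation is the corresponding translation of the torus, so its
   coefficient is a sign; likewise for the other three vertices.  Laurent
   coefficients are unique (a Kronecker substitution reduces this to
   polynomials in one variable), so every representation has this support. *)

From Pilot Require Import Defs.
From HB Require Import structures.
From mathcomp Require Import all_boot all_order all_algebra.
From mathcomp Require Import reals.
From mathcomp.real_closed Require Import complex.
From mathcomp Require Import perm zify ring lra.
Set Implicit Arguments. Unset Strict Implicit. Unset Printing Implicit Defensive.
Import Order.TTheory GRing.Theory Num.Theory.
Local Open Scope ring_scope.

Lemma big_seq_pred1 (V : nmodType) (T : eqType) (s : seq T) (e0 : T) (G : T -> V) :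
  uniq s -> e0 \in s -> \sum_(e <- s | e == e0) G e = G e0.
Proof. by move=> us e0s; rewrite -big_filter filter_pred1_uniq // big_seq1. Qed.

(** * Uniqueness of Laurent coefficients *)

Lemma laurent_coef_eq0 (F : numFieldType) (T : eqType) (s : seq T) (g : T -> F)
    (phi : T -> int) :
  uniq s -> {in s &, injective phi} ->
  (forall x : F, x != 0 -> \sum_(e <- s) g e * x ^ phi e = 0) ->
  {in s, forall e, g e = 0}.
Proof.
move=> us phi_inj g0 e0 e0s.
pose N : int := \sum_(e <- s) `|phi e|.
have phiN_ge0 e : e \in s -> 0 <= phi e + N.
  move=> es; rewrite /N (bigD1_seq e) //=.
  rewrite addrA addr_ge0 ?sumr_ge0 // -(lerD2l (- phi e)) addr0 addKr.
  by rewrite -normrN ler_norm.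
pose deg e : nat := absz (phi e + N).
have degE e : e \in s -> deg e = phi e + N :> int.
  by move=> es; rewrite /deg gez0_abs ?phiN_ge0.
pose p : {poly F} := \sum_(e <- s) g e *: 'X^(deg e).
have p_root (i : nat) : root p i.+1%:R.
  have xn0 : i.+1%:R != 0 :> F by rewrite pnatr_eq0.
  apply/rootP; rewrite -(mul0r (i.+1%:R ^ N)) -(g0 _ xn0) horner_sum mulr_suml.
  apply: eq_big_seq => e es; rewrite hornerZ hornerXn -mulrA -expfzDr //.
  by rewrite -degE.
have p0 : p = 0.
  apply: (@roots_geq_poly_eq0 _ _ [seq i.+1%:R | i <- iota 0 (size p)]).
  - by apply/allP => _ /mapP [i _ ->]; apply: p_root.
  - by rewrite map_inj_uniq ?iota_uniq // => i j /eqP; rewrite eqr_nat => /eqP [].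
  - by rewrite size_map size_iota.
have : p`_(deg e0) = g e0.
  rewrite coef_sumMXn -(big_seq_pred1 g us e0s) big_seq_cond [RHS]big_seq_cond.
  apply: eq_bigl => e; case es: (e \in s) => //=; apply/eqP/eqP => [|-> //].
  move/(congr1 Posz); rewrite !degE // => /addIr.
  exact: phi_inj.
by rewrite p0 coef0.
Qed.

Lemma laurent2_coef_eq0 (F : numFieldType) (s : seq (int * int)) (g : int * int -> F) :
  uniq s ->
  (forall z1 z2 : F, z1 != 0 -> z2 != 0 ->
     \sum_(e <- s) g e * z1 ^ e.1 * z2 ^ e.2 = 0) ->
  {in s, forall e, g e = 0}.
Proof.
move=> us g0.
pose B : int := \sum_(e <- s) `|e.1|.
have bound e : e \in s -> - B <= e.1 <= B.
  move=> es; rewrite -ler_norml /B (bigD1_seq e) //= lerDl.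
  exact: sumr_ge0.
pose M := 2 * B + 1.
(* Kronecker substitution z2 = z1 ^ M, injective on exponents since |e.1| <= B < M / 2 *)
apply: (@laurent_coef_eq0 F _ s g (fun e => e.1 + e.2 * M)) => //.
  move=> [a b] [c d] /bound /= ha /bound /= hc h.
  have bd : b = d by nia.
  by rewrite bd in h *; move/addIr: h => ->.
move=> x xn0; rewrite -[RHS](g0 x (x ^ M)) ?expfz_neq0 //.
by apply: eq_bigr => e _; rewrite -mulrA exprz_exp -expfzDr // (mulrC M).
Qed.

Section LaurentRep.
Variable R : realType.
Implicit Types (f : R[i] -> R[i] -> R[i]) (c : int * int -> R[i]).

Lemma laurent_rep_sum f c (t : seq (int * int)) :
  laurent_rep f c -> uniq t -> (forall e, c e != 0 -> e \in t) ->
  forall z1 z2 : R[i], z1 != 0 -> z2 != 0 ->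
    f z1 z2 = \sum_(e <- t) c e * z1 ^ e.1 * z2 ^ e.2.
Proof.
case=> s [us cs fs] ut ct z1 z2 z1n0 z2n0; rewrite fs //.
apply: perm_big_supp; apply: uniq_perm; rewrite ?filter_uniq // => e.
rewrite !mem_filter !mulf_eq0 !expfz_eq0 (negbTE z1n0) (negbTE z2n0) !andbF !orbF.
by case: (boolP (c e == 0)) => //= /[dup] /cs -> /ct ->.
Qed.

Lemma laurent_rep_uniq f c c' : laurent_rep f c -> laurent_rep f c' -> c =1 c'.
Proof.
move=> fc fc'; have [s [_ cs _]] := fc; have [s' [_ cs' _]] := fc'.
pose t := undup (s ++ s').
have ct e : c e != 0 -> e \in t by move/cs; rewrite mem_undup mem_cat => ->.
have ct' e : c' e != 0 -> e \in t.
  by move/cs'; rewrite mem_undup mem_cat => ->; rewrite orbT.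
move=> e; case: (boolP (e \in t)) => et; last first.
  by move: (contra (ct e) et) (contra (ct' e) et) => /negPn/eqP -> /negPn/eqP ->.
apply/eqP; rewrite -subr_eq0; apply/eqP; move: e et.
apply: laurent2_coef_eq0 => [|z1 z2 z1n0 z2n0]; first exact: undup_uniq.
under eq_bigr do rewrite !mulrBl.
by rewrite sumrB -(laurent_rep_sum fc) -?(laurent_rep_sum fc') ?undup_uniq ?subrr.
Qed.

End LaurentRep.

(** * Convex hull of the diamond *)

Definition diamond_vertices (q1 q2 : nat) : seq (int * int) :=
  [:: (q2%:Z, 0%Z); (0%Z, q1%:Z); (- q2%:Z, 0%Z); (0%Z, - q1%:Z)].

Section ConvexHull.
Variable R : realType.
Implicit Types (s t : seq (int * int)) (w : int * int -> R) (p : R * R).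

Definition barycentric t w p : Prop :=
  [/\ {in t, forall e, 0 <= w e}, \sum_(e <- t) w e = 1,
      p.1 = \sum_(e <- t) w e * (ptR R e).1 &
      p.2 = \sum_(e <- t) w e * (ptR R e).2].

Lemma barycentric_trans s t w (u : int * int -> int * int -> R) p :
  {in s, forall e, barycentric t (u e) (ptR R e)} -> barycentric s w p ->
  barycentric t (fun v => \sum_(e <- s) w e * u e v) p.
Proof.
move=> su [w0 w1 p1 p2].
have comb (F : int * int -> R) (G : int * int -> R) :
    {in s, forall e, G e = \sum_(v <- t) u e v * F v} ->
    \sum_(e <- s) w e * G e = \sum_(v <- t) (\sum_(e <- s) w e * u e v) * F v.
  move=> GE; under [RHS]eq_bigr do rewrite mulr_suml.
  rewrite exchange_big /=; apply: eq_big_seq => e es.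
  by rewrite GE // mulr_sumr; apply: eq_bigr => v _; rewrite mulrA.
split.
- move=> v vt; rewrite big_seq_cond; apply: sumr_ge0 => e /andP [es _].
  by rewrite mulr_ge0 ?w0 //; case: (su e es) => + _ _ _; apply.
- rewrite -[RHS]w1 -(eq_bigr _ (fun e _ => mulr1 (w e))).
  rewrite (comb (fun=> 1)) => [|e /su [_ ue1 _ _]].
    by under [RHS]eq_bigr do rewrite mulr1.
  by under eq_bigr do rewrite mulr1; rewrite ue1.
- by rewrite p1; apply: comb => e /su [].
- by rewrite p2; apply: comb => e /su [].
Qed.

Variables q1 q2 : nat.
Hypotheses (q1_gt0 : (0 < q1)%N) (q2_gt0 : (0 < q2)%N).

(* With a = p.1 / q2 and b = p.2 / q1, the horizontal vertices carry the
   positive and negative parts of a, the vertical ones those of b, and the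
   slack 1 - |a| - |b| is split evenly between the two horizontal ones. *)
Definition diamond_weight p (v : int * int) : R :=
  let a := p.1 / q2%:R in let b := p.2 / q1%:R in
  let r := 1 - `|a| - `|b| in
  (if 0 < v.1 then (`|a| + a + r) / 2 else 0) +
  (if v.1 < 0 then (`|a| - a + r) / 2 else 0) +
  (if 0 < v.2 then (`|b| + b) / 2 else 0) +
  (if v.2 < 0 then (`|b| - b) / 2 else 0).

Lemma diamond_barycentric p :
  q1%:R * `|p.1| + q2%:R * `|p.2| <= q1%:R * q2%:R :> R ->
  barycentric (diamond_vertices q1 q2) (diamond_weight p) p.
Proof.
move=> p_in.
have q1R : 0 < q1%:R :> R by rewrite ltr0n.
have q2R : 0 < q2%:R :> R by rewrite ltr0n.
rewrite /diamond_weight; set a := p.1 / _; set b := p.2 / _.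
have p1E : p.1 = a * q2%:R by rewrite divfK ?gt_eqF.
have p2E : p.2 = b * q1%:R by rewrite divfK ?gt_eqF.
have ab_le1 : `|a| + `|b| <= 1.
  rewrite -(ler_pM2r (mulr_gt0 q1R q2R)) mul1r.
  move: p_in; rewrite p1E p2E !normrM (gtr0_norm q1R) (gtr0_norm q2R); nra.
have a_le := ler_norm a; have b_le := ler_norm b.
have Na_le : - a <= `|a| by rewrite -normrN ler_norm.
have Nb_le : - b <= `|b| by rewrite -normrN ler_norm.
split.
- by move=> v _; do 4 case: ifP => _; lra.
all: rewrite /diamond_vertices !big_cons big_nil /ptR /=.
all: rewrite !oppr_gt0 !oppr_lt0 !ltz_nat q1_gt0 q2_gt0 /=.
all: rewrite ?mulr0z ?mulrNz -?pmulrn; lra.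
Qed.

Lemma conv_hull_diamond (A : int * int -> Prop) p :
  (forall e, A e -> q1%:Z * `|e.1| + q2%:Z * `|e.2| <= q1%:Z * q2%:Z) ->
  {in diamond_vertices q1 q2, forall e, A e} ->
  conv_hull A p <-> conv_hull (fun e => e \in diamond_vertices q1 q2) p.
Proof.
move=> A_in vA; split => -[s [w [sA w0 w1 p1 p2]]]; last first.
  by exists s, w; split => // e /sA /vA.
have sv e : e \in s ->
    barycentric (diamond_vertices q1 q2) (diamond_weight (ptR R e)) (ptR R e).
  move=> /sA /A_in e_in; apply: diamond_barycentric.
  by move: e_in; rewrite -(ler_int R) intrD !intrM !intr_norm.
have [] := barycentric_trans sv (And4 w0 w1 p1 p2).
by exists (diamond_vertices q1 q2),
  (fun v => \sum_(e <- s) w e * diamond_weight (ptR R e) v).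
Qed.

End ConvexHull.

(** * Leibniz expansion of the determinant *)

Lemma prodfXzr (F : fieldType) (I : Type) (r : seq I) (P : pred I) (x : F)
    (e : I -> int) : x != 0 -> \prod_(i <- r | P i) x ^ e i = x ^ (\sum_(i <- r | P i) e i).
Proof.
by move=> xn0; apply/esym/(big_morph _ (fun a b => expfzDr a b xn0) (expr0z x)).
Qed.

Section Determinant.
Variable R : realType.
Variables (q1 q2 : nat) (V : int * int -> R) (lam : R[i]).
Hypotheses (q1_gt0 : (0 < q1)%N) (q2_gt0 : (0 < q2)%N).

Local Notation T := (cell q1 q2).
Local Notation n := #|{: cell q1 q2}|.

Definition site (i : 'I_n) : int * int :=
  let a : T := enum_val i in ((a.1 : nat)%:Z, (a.2 : nat)%:Z).

Lemma site_inj : injective site.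
Proof.
move=> i j eq_ij; apply: enum_val_inj; move: eq_ij; rewrite /site.
by case: (enum_val i) (enum_val j) => [a1 a2] [b1 b2] /= [/val_inj -> /val_inj ->].
Qed.

Definition step (k : 'I_5) : int * int := nth (0, 0) ((0, 0) :: dirs) k.

(* [hop i j k]: site [j] is site [i] moved by [step k] on the torus
   Z^2 / (q1 Z x q2 Z); [winding i k] counts how often that move wraps around. *)
Definition hop (i j : 'I_n) (k : 'I_5) : bool :=
  ((site j).1 == ((site i).1 + (step k).1) %% q1%:Z)%Z &&
  ((site j).2 == ((site i).2 + (step k).2) %% q2%:Z)%Z.

Definition winding (i : 'I_n) (k : 'I_5) : int * int :=
  (((site i).1 + (step k).1) %/ q1%:Z, ((site i).2 + (step k).2) %/ q2%:Z)%Z.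

Definition hop_weight (i : 'I_n) (k : 'I_5) : R[i] :=
  if k == ord0 then Complex (V ((site i).1 + 1, (site i).2 + 1)) 0 - lam else 1.

Lemma hop0 i j : hop i j ord0 = (i == j).
Proof.
rewrite /hop /= !addr0 !modz_small ?ltz_nat ?ltn_ord //.
by rewrite -xpair_eqE (inj_eq site_inj) eq_sym.
Qed.

Lemma winding0 i : winding i ord0 = (0, 0)%Z.
Proof. by rewrite /winding /= !addr0 !divz_small ?ltz_nat ?ltn_ord. Qed.

Lemma Dmx_entry (z1 z2 : R[i]) (i j : 'I_n) :
  (Dmx q1 q2 V z1 z2 - lam%:M) i j =
  \sum_(k < 5) (hop i j k)%:R * hop_weight i k *
                 z1 ^ (winding i k).1 * z2 ^ (winding i k).2.
Proof.
have hopE k (x y : R[i]) :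
    (hop i j k)%:R * hop_weight i k * x * y =
    if hop i j k then hop_weight i k * x * y else 0.
  by case: hop; rewrite ?mul1r ?mul0r.
rewrite !mxE /dirs !big_cons big_nil !big_ord_recl big_ord0 hop0 winding0 !hopE.
rewrite /hop_weight /hop /winding /= (inj_eq enum_val_inj) !expr0z !mulr1 !mul1r !addr0.
by case: (i == j); rewrite ?mul1r ?mul0r ?add0r ?subr0 // addrAC.
Qed.

Local Notation move_choice := {ffun 'I_n -> 'I_5}.

Definition term (s : 'S_n) (f : move_choice) : R[i] :=
  (-1) ^+ s * \prod_i ((hop i (s i) (f i))%:R * hop_weight i (f i)).

Definition degree (f : move_choice) : int * int :=
  (\sum_i (winding i (f i)).1, \sum_i (winding i (f i)).2).

Lemma Pdet_expand (z1 z2 : R[i]) : z1 != 0 -> z2 != 0 ->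
  Pdet q1 q2 V lam z1 z2 =
  \sum_(s : 'S_n) \sum_(f : move_choice)
    term s f * z1 ^ (degree f).1 * z2 ^ (degree f).2.
Proof.
move=> z1n0 z2n0; rewrite /Pdet /determinant; apply: eq_bigr => s _.
under eq_bigr do rewrite Dmx_entry.
rewrite bigA_distr_bigA mulr_sumr; apply: eq_bigr => f _.
by rewrite /term !big_split /= !prodfXzr // !mulrA.
Qed.

Definition coef (e : int * int) : R[i] :=
  \sum_(s : 'S_n) \sum_(f : move_choice | degree f == e) term s f.

Definition degrees : seq (int * int) :=
  undup [seq degree f | f <- enum {: move_choice}].

Lemma mem_degrees f : degree f \in degrees.
Proof. by rewrite mem_undup map_f ?mem_enum. Qed.

Lemma coef_rep : laurent_rep (Pdet q1 q2 V lam) coef.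
Proof.
exists degrees; split; first exact: undup_uniq.
  move=> e; apply: contraR => e_deg; rewrite /coef big1 // => s _.
  by rewrite big1 // => f /eqP fe; rewrite -fe mem_degrees in e_deg.
move=> z1 z2 z1n0 z2n0; rewrite Pdet_expand // /coef.
under [RHS]eq_bigr => e _.
  rewrite !mulr_suml; under eq_bigr => s _ do rewrite !mulr_suml big_mkcond.
  over.
rewrite /= [RHS]exchange_big; apply: eq_bigr => s _ /=.
rewrite [RHS]exchange_big; apply: eq_bigr => f _ /=.
rewrite -big_mkcond (eq_bigl (pred1 (degree f))) => [|e]; last exact: eq_sym.
rewrite (big_seq_pred1 (fun e => term s f * z1 ^ e.1 * z2 ^ e.2)) //.
  exact: undup_uniq.
exact: mem_degrees.
Qed.

Lemma hop_winding i j k : hop i j k ->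
  (winding i k).1 * q1%:Z = (site i).1 + (step k).1 - (site j).1 /\
  (winding i k).2 * q2%:Z = (site i).2 + (step k).2 - (site j).2.
Proof.
case/andP => /eqP -> /eqP ->.
by split; apply/eqP; rewrite eq_sym subr_eq -divz_eq.
Qed.

Lemma term_hop s f : term s f != 0 -> forall i, hop i (s i) (f i).
Proof.
rewrite /term mulf_eq0 negb_or => /andP [_ /prodf_neq0 hf] i.
by move: (hf i isT); rewrite mulf_eq0 negb_or pnatr_eq0 eqb0 negbK => /andP [].
Qed.

(* Summing [hop_winding] over a permutation, the sites cancel. *)
Lemma degree_scaled s f : term s f != 0 ->
  (degree f).1 * q1%:Z = \sum_i (step (f i)).1 /\
  (degree f).2 * q2%:Z = \sum_i (step (f i)).2.
Proof.
move/term_hop => hf.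
have perm_cancel (F G : 'I_n -> int) : \sum_i (F i + G i - F (s i)) = \sum_i G i.
  by rewrite sumrB big_split /= (reindex_inj (@perm_inj _ s)) addrAC subrr add0r.
rewrite /degree /= !mulr_suml; split.
  by rewrite (eq_bigr _ (fun i _ => (hop_winding (hf i)).1)) perm_cancel.
by rewrite (eq_bigr _ (fun i _ => (hop_winding (hf i)).2)) perm_cancel.
Qed.

Lemma step_norm k : `|(step k).1| + `|(step k).2| <= 1.
Proof. by case: k => [[|[|[|[|[|?]]]]] ?]. Qed.

Lemma card_cell : n = (q1 * q2)%N.
Proof. by rewrite card_prod !card_ord. Qed.

Lemma degree_bound s f : term s f != 0 ->
  q1%:Z * `|(degree f).1| + q2%:Z * `|(degree f).2| <= q1%:Z * q2%:Z.
Proof.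
move/degree_scaled => [d1 d2].
have -> : q1%:Z * `|(degree f).1| = `|\sum_i (step (f i)).1|.
  by rewrite -d1 normrM mulrC (@ger0_norm _ q1%:Z).
have -> : q2%:Z * `|(degree f).2| = `|\sum_i (step (f i)).2|.
  by rewrite -d2 normrM mulrC (@ger0_norm _ q2%:Z).
apply: le_trans (lerD (ler_norm_sum _ _ _) (ler_norm_sum _ _ _)) _.
rewrite -big_split /=; apply: le_trans (ler_sum _ (fun i _ => step_norm (f i))) _.
by rewrite sumr_const card_ord card_cell natz PoszM.
Qed.

Lemma coef_support_bound e : coef e != 0 ->
  q1%:Z * `|e.1| + q2%:Z * `|e.2| <= q1%:Z * q2%:Z.
Proof.
apply: contraR => e_out; rewrite /coef big1 // => s _; rewrite big1 // => f /eqP fe.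
by apply/eqP; apply: contraR e_out => /degree_bound; rewrite fe.
Qed.

Lemma hop_functional i j j' k : hop i j k -> hop i j' k -> j = j'.
Proof.
move=> /andP [/eqP h1 /eqP h2] /andP [/eqP h1' /eqP h2']; apply: site_inj.
by move: h1 h2 h1' h2'; case: (site j) (site j') => [a b] [c d] /= -> -> -> ->.
Qed.

Lemma hop_inj i i' j k : hop i j k -> hop i' j k -> i = i'.
Proof.
have site_mod (q : nat) (x y : 'I_q) d :
    ((x%:Z + d) %% q%:Z = (y%:Z + d) %% q%:Z)%Z -> x%:Z = y%:Z.
  by move/eqP; rewrite eqz_modDr !modz_small ?ltz_nat ?ltn_ord // => /eqP.
move=> /andP [/eqP h1 /eqP h2] /andP [/eqP h1' /eqP h2']; apply: site_inj.
congr pair; apply: site_mod.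
  exact: etrans (esym h1) h1'.
exact: etrans (esym h2) h2'.
Qed.

Lemma absz_modz_lt (q : nat) (x : int) : (0 < q)%N -> (absz (x %% q%:Z)%Z < q)%N.
Proof.
move=> q_gt0; have qn0 : q%:Z != 0 by rewrite eqz_nat -lt0n.
by rewrite -ltz_nat gez0_abs ?modz_ge0 // ltz_pmod // ltz_nat.
Qed.

Definition torus_shift (k : 'I_5) (a : T) : T :=
  (Ordinal (absz_modz_lt ((a.1 : int) + (step k).1) q1_gt0),
   Ordinal (absz_modz_lt ((a.2 : int) + (step k).2) q2_gt0)).

Definition shift_index (k : 'I_5) (i : 'I_n) : 'I_n :=
  enum_rank (torus_shift k (enum_val i)).

Lemma hop_shift_index k i : hop i (shift_index k i) k.
Proof.
have q1n0 : q1%:Z != 0 by rewrite eqz_nat -lt0n.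
have q2n0 : q2%:Z != 0 by rewrite eqz_nat -lt0n.
by rewrite /hop /site /shift_index enum_rankK /= !gez0_abs ?modz_ge0 ?eqxx.
Qed.

Lemma shift_index_inj k : injective (shift_index k).
Proof.
move=> i i' eq_ii'; apply: (hop_inj (hop_shift_index k i)).
by rewrite eq_ii' hop_shift_index.
Qed.

Definition shift_perm (k : 'I_5) : 'S_n := perm (@shift_index_inj k).

Lemma hop_shift_perm k i : hop i (shift_perm k i) k.
Proof. by rewrite permE hop_shift_index. Qed.

Definition vertex (k : 'I_5) : int * int := (q2%:Z * (step k).1, q1%:Z * (step k).2).

Definition step_dot (k k' : 'I_5) : int :=
  (step k).1 * (step k').1 + (step k).2 * (step k').2.

Lemma step_dot_leif k k' : k != ord0 -> step_dot k k' <= 1 ?= iff (k' == k).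
Proof. by case: k => [[|[|[|[|[|?]]]]] ?] //; case: k' => [[|[|[|[|[|?]]]]] ?]. Qed.

(* The steps add up to n (step k), yet each has scalar product at most 1 with
   [step k], with equality only for [step k] itself. *)
Lemma vertex_term k s f : k != ord0 -> degree f = vertex k -> term s f != 0 ->
  f = [ffun=> k] /\ s = shift_perm k.
Proof.
move=> k_neq0 fk tsf; have [d1 d2] := degree_scaled tsf.
have step_k_unit : step_dot k k = 1.
  by case: (step_dot_leif k k_neq0) => _ /eqP; rewrite eqxx.
have sum_dot : \sum_i step_dot k (f i) = \sum_(i : 'I_n) 1.
  rewrite big_split /= -!mulr_sumr -d1 -d2 fk sumr_const card_ord card_cell.
  rewrite -step_k_unit /step_dot /=.
  by rewrite -mulr_natr natz PoszM; ring.
have f_k i : f i = k.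
  have [_] := leif_sum (fun i (_ : true) => step_dot_leif (f i) k_neq0).
  by rewrite sum_dot eqxx => /esym/forallP/(_ i)/eqP.
split; first by apply/ffunP => i; rewrite ffunE f_k.
apply/permP => i; apply: hop_functional (hop_shift_perm k i).
by rewrite -[X in hop _ _ X](f_k i); apply: term_hop.
Qed.

Lemma coef_vertex k : k != ord0 -> coef (vertex k) = (-1) ^+ shift_perm k.
Proof.
move=> k_neq0.
have term_shift : term (shift_perm k) [ffun=> k] = (-1) ^+ shift_perm k.
  rewrite /term big1 ?mulr1 // => i _.
  by rewrite ffunE hop_shift_perm /hop_weight (negbTE k_neq0) mulr1.
have degree_k : degree [ffun=> k] = vertex k.
  have sum_k (g : 'I_5 -> int) :
      \sum_i g (([ffun=> k] : move_choice) i) = q1%:Z * q2%:Z * g k.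
    under eq_bigr do rewrite ffunE.
    by rewrite sumr_const card_ord card_cell -mulr_natl natz PoszM mulrC.
  have [] := degree_scaled (s := shift_perm k) (f := [ffun=> k]).
    by rewrite term_shift signr_eq0.
  rewrite (sum_k (fun k => (step k).1)) (sum_k (fun k => (step k).2)) /vertex.
  case: (degree _) => x y /= d1 d2; congr pair.
    by apply: (@mulIf _ q1%:Z); rewrite ?d1 ?eqz_nat -?lt0n //; ring.
  by apply: (@mulIf _ q2%:Z); rewrite ?d2 ?eqz_nat -?lt0n //; ring.
have other_terms s f :
    degree f = vertex k -> (s != shift_perm k) || (f != [ffun=> k]) -> term s f = 0.
  move=> fk; apply: contraTeq => /(vertex_term k_neq0 fk) [-> ->].
  by rewrite !eqxx.
rewrite /coef (bigD1 (shift_perm k)) //= (bigD1 [ffun=> k]) ?degree_k //= term_shift.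
rewrite big1 => [|f /andP [/eqP fk f_ne]]; last by rewrite other_terms ?f_ne ?orbT.
rewrite addr0 big1 ?addr0 // => s s_ne; rewrite big1 // => f /eqP fk.
by rewrite other_terms ?s_ne.
Qed.

Lemma diamond_vertexP e :
  e \in diamond_vertices q1 q2 -> exists2 k : 'I_5, k != ord0 & e = vertex k.
Proof.
rewrite !inE => /or4P [] /eqP ->.
- by exists (@Ordinal 5 1 isT); rewrite // /vertex /= mulr1 mulr0.
- by exists (@Ordinal 5 3 isT); rewrite // /vertex /= mulr1 mulr0.
- by exists (@Ordinal 5 2 isT); rewrite // /vertex /= mulrN1 mulr0.
- by exists (@Ordinal 5 4 isT); rewrite // /vertex /= mulrN1 mulr0.
Qed.

End Determinant.

Theorem lemma4p4 (R : realType) (q1 q2 : nat) (V : int * int -> R) (lam : R[i]) :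
  (0 < q1)%N -> (0 < q2)%N -> coprime q1 q2 -> periodic q1 q2 V ->
  (exists c, laurent_rep (Pdet q1 q2 V lam) c) /\
  (forall c, laurent_rep (Pdet q1 q2 V lam) c ->
     forall p : R * R,
       newton_polytope c p <->
       conv_hull (R:=R) (fun e => e \in [:: (q2%:Z, 0%Z); (0%Z, q1%:Z);
                                       (- q2%:Z, 0%Z); (0%Z, - q1%:Z)]) p).
Proof.
move=> q1_gt0 q2_gt0 _ _.
have rep := coef_rep q1 q2 V lam.
split=> [|c c_rep p]; first by exists (coef q1 q2 V lam).
have c_coef := laurent_rep_uniq c_rep rep.
apply: (conv_hull_diamond q1_gt0 q2_gt0) => e; rewrite /Defs.support c_coef.
  exact: coef_support_bound.
by case/diamond_vertexP => k k_neq0 ->; rewrite coef_vertex // signr_eq0.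
Qed.
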